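(* Let $H$ and $K$ be subgroups of a finite group $G$ such that $HK$ is a subgroup. If $H\cap K$ is a perfect code of $K$, then $H$ is a perfect code of $HK$.
   Context: For a group $G$ with identity $e$ and an inverse-closed subset $S\subseteq G\setminus\{e\}$, the Cayley graph $\mathrm{Cay}(G,S)$ has vertex set $G$ and edges $\{g,sg\}$ for $s\in S$, $g\in G$. A perfect code in a graph is an independent set $C$ of vertices such that every vertex outside $C$ is adjacent to exactly one vertex of $C$. A subgroup $H$ of $G$ is a perfect code of $G$ if some Cayley graph of $G$ admits $H$ as a perfect code. *)

From mathcomp Require Import all_boot all_fingroup.
Set Implicit Arguments. Unset Strict Implicit. Unset Printing Implicit Defensive.
Local Open Scope group_scope.

(* Cayley graph Cay(G,S): vertex set G, edges {g, s g} for s in S. *)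
Definition cay_adj (gT : finGroupType) (S : {set gT}) (g h : gT) : bool :=
  h * g^-1 \in S.

Definition connection_set (gT : finGroupType) (G S : {set gT}) : Prop :=
  [/\ S \subset G, 1 \notin S & forall s, s \in S -> s^-1 \in S].

Definition perfect_code_cay (gT : finGroupType) (G S C : {set gT}) : Prop :=
  [/\ C \subset G,
      (forall c1 c2, c1 \in C -> c2 \in C -> ~~ cay_adj S c1 c2) &
      (forall g, g \in G -> g \notin C ->
         #|[set c in C | cay_adj S g c]| = 1%N)].

Definition subgroup_perfect_code (gT : finGroupType) (G H : {set gT}) : Prop :=
  H \subset G /\ exists S : {set gT}, connection_set G S /\ perfect_code_cay G S H.

From mathcomp Require Import all_boot all_fingroup.
Local Open Scope group_scope.

(* Take the connection set S of a Cayley graph of K admitting H :&: K as a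
   perfect code; S \subset K, so it is also a connection set of HK.  A
   subgroup is independent in Cay(_, S) iff it misses S, and H misses S
   because S \subset K.  For g = k h in HK = KH outside H, right translation
   by h maps the neighbours of k in H onto those of g, and as S \subset K the
   neighbours of k in H all lie in H :&: K: there is exactly one of them. *)

Section CayleyNeighbours.

Variables (gT : finGroupType) (S : {set gT}).

Definition cay_nbrs (C : {set gT}) (g : gT) : {set gT} :=
  [set c in C | cay_adj S g c].

Lemma cay_adj1g c : cay_adj S 1 c = (c \in S).
Proof. by rewrite /cay_adj invg1 mulg1. Qed.

Lemma cay_adjMr g c x : cay_adj S (g * x) (c * x) = cay_adj S g c.
Proof. by rewrite /cay_adj invMg mulgA mulgK. Qed.

Lemma cay_independent_groupP (H : {group gT}) :
  reflect (forall c1 c2, c1 \in H -> c2 \in H -> ~~ cay_adj S c1 c2)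
          [disjoint S & H].
Proof.
apply: (iffP idP) => [dSH c1 c2 c1H c2H | indepH].
  rewrite -(cay_adjMr _ _ c1^-1) mulgV cay_adj1g.
  by rewrite (disjointFl dSH) ?groupMr ?groupV.
rewrite disjoint_subset; apply/subsetP => s sS; apply/negP => /= sH.
by have := indepH 1 s (group1 H) sH; rewrite cay_adj1g sS.
Qed.

Lemma cay_nbrsMr (H : {group gT}) g h :
  h \in H -> cay_nbrs H (g * h) = cay_nbrs H g :* h.
Proof.
move=> hH; apply/setP => c.
by rewrite mem_rcoset !inE groupMr ?groupV // -(cay_adjMr g _ h) mulgKV.
Qed.

Lemma cay_nbrsI (K : {group gT}) C k :
  S \subset K -> k \in K -> cay_nbrs C k = cay_nbrs (C :&: K) k.
Proof.
move=> sSK kK; apply/setP => c; rewrite !inE.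
case adj: (cay_adj S k c); rewrite ?andbF //.
have := subsetP sSK _ adj; rewrite groupMr ?groupV // => cK.
by rewrite cK !andbT.
Qed.

Lemma perfect_code_cay_mulg (H K : {group gT}) :
  S \subset K -> group_set (H * K) ->
  perfect_code_cay K S (H :&: K) -> perfect_code_cay (H * K) S H.
Proof.
move=> sSK gHK [_ /cay_independent_groupP dS_HK nbrs1].
have dSH : [disjoint S & H].
  rewrite disjoint_subset; apply/subsetP => s sS; apply/negP => /= sH.
  by have := disjointFr dS_HK sS; rewrite inE sH (subsetP sSK).
split; [exact: mulG_subl | exact/cay_independent_groupP |].
have -> : H * K = K * H by apply/comm_group_setP.
move=> _ /mulsgP[k h kK hH ->] khH.
have kHK : k \notin H :&: K.
  by apply: contra khH; rewrite inE => /andP[kH _]; rewrite groupM.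
rewrite -/(cay_nbrs H (k * h)) cay_nbrsMr // card_rcoset.
by rewrite (cay_nbrsI _ _ _ sSK kK); apply: nbrs1.
Qed.

End CayleyNeighbours.

Theorem lemma4p1 (gT : finGroupType) (G H K : {group gT}) :
  H \subset G -> K \subset G -> group_set (H * K) ->
  subgroup_perfect_code K (H :&: K) ->
  subgroup_perfect_code (H * K) H.
Proof.
move=> _ _ gHK [_ [S [[sSK S1 Sinv] codeHK]]].
split; first exact: mulG_subl.
exists S; split; last exact: perfect_code_cay_mulg.
by split=> //; apply: subset_trans sSK (mulG_subr H K).
Qed.
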